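(* Let $(x_n,y_m)$ and $(\tilde x_n,\tilde y_m)$ be two pairs of slightly perturbed increasing arithmetic progressions, $x_n=\alpha n+\beta+o(1)$, $y_m=\gamma m+\delta+o(1)$, $\tilde x_n=\tilde\alpha n+\tilde\beta+o(1)$, $\tilde y_m=\tilde\gamma m+\tilde\delta+o(1)$, with irrational relative densities $\alpha/\gamma$ and $\tilde\alpha/\tilde\gamma$. If the two pairs are topologically equivalent at $+\infty$, then $\alpha/\gamma=\tilde\alpha/\tilde\gamma$, and $\frac{\beta-\delta}{\gamma}-\frac{\tilde\beta-\tilde\delta}{\tilde\gamma}$ lies in the additive subgroup of $\mathbb R$ generated by $1$ and $\alpha/\gamma$.
   Context: A slightly perturbed arithmetic progression is a sequence of the form $x_n=An+\tau+o(1)$, $n\to+\infty$. For a pair $(\alpha n+\beta+o(1),\ \gamma m+\delta+o(1))$ the relative density is $\alpha/\gamma$ and the normalized difference of free terms is $(\beta-\delta)/\gamma$. Two pairs of sequences on the line are topologically equivalent at $+\infty$ if there is a homeomorphism of the line defined in a neighborhood of $+\infty$ mapping the first sequence of the first pair to the first sequence of the second pair and the second to the second. *)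

From Stdlib Require Import Reals ZArith.
Open Scope R_scope.

Definition perturbed_AP (x : nat -> R) (A tau : R) : Prop :=
  Un_cv (fun n => x n - (A * INR n + tau)) 0.

Definition irrational (r : R) : Prop :=
  ~ exists p q : Z, q <> 0%Z /\ r = IZR p / IZR q.

Definition in_group_1_rho (rho r : R) : Prop :=
  exists p q : Z, r = IZR p + IZR q * rho.

Definition homeo_near_pinfty (h : R -> R) (a b : R) : Prop :=
  exists g : R -> R,
    (forall t, a < t -> b < h t) /\
    (forall s, b < s -> a < g s) /\
    (forall t, a < t -> g (h t) = t) /\
    (forall s, b < s -> h (g s) = s) /\
    (forall t, a < t -> continuity_pt h t) /\
    (forall s, b < s -> continuity_pt g s).

Definition top_equiv_pinfty (x y x' y' : nat -> R) : Prop :=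
  exists (h : R -> R) (a b : R), homeo_near_pinfty h a b /\
    (forall t, a < t ->
       ((exists n, x n = t) <-> (exists n, x' n = h t)) /\
       ((exists m, y m = t) <-> (exists m, y' m = h t))).

From Stdlib Require Import Reals ZArith Lra Lia List Classical.
Open Scope R_scope.

(* The homeomorphism h is injective and unbounded near +oo, so an
   intermediate value argument makes it increasing.  Since the ranges of x
   and x' are discrete, h then sends x_(N+i) to x'_(P+i) and y_(M+j) to y'_(Q+j)
   for all i, j.  An increasing map preserves the relative order of x_(N+i) and
   y_(M+j), which up to o(1) is the sign of j - rho i - c with rho = alpha/gamma.
   As rho is irrational, the numbers j - rho i with i, j large are dense, so the sign
   patterns of j - rho i - c and j - rho' i - c' can only agree when rho = rho'
   and c = c'; undoing the index shifts gives the element of Z + rho Z. *)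

Lemma mult_INR_eventually_gt (A B : R) :
  0 < A -> exists N, forall n, (N <= n)%nat -> B < A * INR n.
Proof.
  intros HA. destruct (INR_unbounded (B / A)) as [N HN].
  exists N. intros n Hn. apply le_INR in Hn.
  replace B with (A * (B / A)) by (field; lra).
  apply Rmult_lt_compat_l; lra.
Qed.

Lemma prefix_bounded (z : nat -> R) (Q : nat) :
  exists B, forall q, (q < Q)%nat -> z q <= B.
Proof.
  induction Q as [|Q [B HB]].
  - exists 0. intros; lia.
  - exists (Rmax B (z Q)). intros q Hq.
    destruct (Nat.eq_dec q Q) as [->|Hne].
    + apply Rmax_r.
    + eapply Rle_trans; [apply HB; lia | apply Rmax_l].
Qed.

Lemma pigeonhole (s f : nat -> R) (Q : nat) :
  (forall i, (i <= Q)%nat -> exists v, (v < Q)%nat /\ s i = f v) ->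
  exists i j, (i < j <= Q)%nat /\ s i = s j.
Proof.
  intros Hsf. apply NNPP. intros Hno.
  assert (Hnodup : NoDup (map s (seq 0 (S Q)))).
  { apply NoDup_map_NoDup_ForallPairs; [|apply seq_NoDup].
    intros i j Hi Hj Hij. apply in_seq in Hi, Hj.
    destruct (Nat.lt_trichotomy i j) as [Hlt|[Heq|Hlt]]; [| exact Heq |];
      exfalso; apply Hno.
    - exists i, j. split; [lia | exact Hij].
    - exists j, i. split; [lia | now symmetry]. }
  assert (Hincl : incl (map s (seq 0 (S Q))) (map f (seq 0 Q))).
  { intros y Hy. apply in_map_iff in Hy as [i [<- Hi]]. apply in_seq in Hi.
    destruct (Hsf i ltac:(lia)) as [v [Hv ->]].
    apply in_map, in_seq. lia. }
  apply NoDup_incl_length in Hincl; [|exact Hnodup].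
  rewrite !length_map, !length_seq in Hincl. lia.
Qed.

Section PerturbedAP.

Variables (z : nat -> R) (A tau : R).
Hypotheses (HA : 0 < A) (Hz : perturbed_AP z A tau).

Lemma perturbed_AP_close (eps : R) : 0 < eps ->
  exists N, forall n, (N <= n)%nat -> Rabs (z n - (A * INR n + tau)) < eps.
Proof.
  intros Heps. destruct (Hz eps Heps) as [N HN]. exists N. intros n Hn.
  specialize (HN n Hn). unfold R_dist in HN. now rewrite Rminus_0_r in HN.
Qed.

Lemma perturbed_AP_shift (N : nat) :
  perturbed_AP (fun i => z (N + i)) A (tau + A * INR N).
Proof.
  apply (Un_cv_ext (fun i => z (i + N)%nat - (A * INR (i + N) + tau))).
  - intros i. rewrite Nat.add_comm, plus_INR. ring.
  - exact (CV_shift' _ N 0 Hz).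
Qed.

Lemma perturbed_AP_cv_infty : cv_infty z.
Proof.
  intros B. destruct (perturbed_AP_close 1 Rlt_0_1) as [N1 HN1].
  destruct (mult_INR_eventually_gt A (B - tau + 1) HA) as [N2 HN2].
  exists (max N1 N2). intros n Hn.
  pose proof (Rabs_def2 _ _ (HN1 n ltac:(lia))).
  pose proof (HN2 n ltac:(lia)). lra.
Qed.

Lemma perturbed_AP_increasing :
  exists N, forall n n', (N <= n)%nat -> (n < n')%nat -> z n < z n'.
Proof.
  destruct (perturbed_AP_close (A / 2) ltac:(lra)) as [N HN].
  exists N. intros n n' Hn Hn'.
  pose proof (Rabs_def2 _ _ (HN n Hn)).
  pose proof (Rabs_def2 _ _ (HN n' ltac:(lia))).
  assert (INR n + 1 <= INR n') by (rewrite <- S_INR; apply le_INR; lia).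
  nra.
Qed.

Lemma perturbed_AP_no_term_between :
  exists N, forall n, (N <= n)%nat -> forall q, ~ (z n < z q < z (S n)).
Proof.
  destruct perturbed_AP_increasing as [Nm HNm].
  destruct (prefix_bounded z Nm) as [B HB].
  destruct (perturbed_AP_cv_infty B) as [NB HNB].
  exists (max Nm NB). intros n Hn q [Hlo Hhi].
  destruct (lt_dec q Nm) as [Hq|Hq].
  - specialize (HB q Hq). specialize (HNB n ltac:(lia)). lra.
  - destruct (Nat.lt_trichotomy q n) as [Hqn|[->|Hqn]]; [| lra |].
    + specialize (HNm q n ltac:(lia) Hqn). lra.
    + destruct (Nat.eq_dec q (S n)) as [->|Hne]; [lra|].
      specialize (HNm (S n) q ltac:(lia) ltac:(lia)). lra.
Qed.

End PerturbedAP.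

Section Homeomorphism.

Variables (h g : R -> R) (a b : R).
Hypotheses (h_maps : forall t, a < t -> b < h t) (g_maps : forall s, b < s -> a < g s)
  (gK : forall t, a < t -> g (h t) = t) (hK : forall s, b < s -> h (g s) = s).

Variables (z z' : nat -> R) (A tau A' tau' : R).
Hypotheses (HA : 0 < A) (HA' : 0 < A')
  (Hz : perturbed_AP z A tau) (Hz' : perturbed_AP z' A' tau')
  (h_ranges : forall t, a < t -> ((exists n, z n = t) <-> (exists n, z' n = h t))).

Lemma in_range_preimage (s : R) : b < s -> (exists p, z' p = s) -> exists q, z q = g s.
Proof.
  intros Hs [p Hp]. apply h_ranges; [auto|]. exists p. rewrite hK; auto.
Qed.

(* Otherwise the infinitely many large terms of z' would all be images of
   the finitely many terms of z below t0. *)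
Lemma h_unbounded (t0 : R) : forall B, exists t, t0 < t /\ B < h t.
Proof.
  intros B. apply NNPP. intros Hno.
  destruct (perturbed_AP_increasing z' A' tau' HA' Hz') as [P1 HP1].
  destruct (perturbed_AP_cv_infty z' A' tau' HA' Hz' (Rmax B b)) as [P2 HP2].
  destruct (perturbed_AP_cv_infty z A tau HA Hz t0) as [Q HQ].
  set (P := max P1 P2).
  assert (Hlarge : forall i, B < z' (P + i)%nat /\ b < z' (P + i)%nat).
  { intros i. pose proof (HP2 (P + i)%nat ltac:(lia)).
    pose proof (Rmax_l B b). pose proof (Rmax_r B b). lra. }
  destruct (pigeonhole (fun i => z' (P + i)%nat) (fun v => h (z v)) Q)
    as [i [j [Hij Heq]]].
  - intros i _. destruct (Hlarge i) as [HB Hb].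
    destruct (in_range_preimage (z' (P + i)%nat) Hb) as [v Hv]; [now exists (P + i)%nat|].
    exists v. split.
    + destruct (lt_dec v Q) as [|Hv']; [assumption | exfalso].
      apply Hno. exists (z v). split; [apply HQ; lia|].
      rewrite Hv, hK; auto.
    + rewrite Hv, hK; auto.
  - specialize (HP1 (P + i)%nat (P + j)%nat ltac:(lia) ltac:(lia)).
    simpl in Heq. lra.
Qed.

(* An intermediate-value argument: a decrease h t2 < h t1 would be undone
   further right, giving a second preimage of h t1. *)
Lemma h_increasing (h_cont : forall t, a < t -> continuity_pt h t) (t1 t2 : R) :
  a < t1 -> t1 < t2 -> h t1 < h t2.
Proof.
  intros H1 H12.
  destruct (Rtotal_order (h t1) (h t2)) as [Hlt|[Heq|Hgt]]; [assumption| exfalso..].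
  - apply (f_equal g) in Heq. rewrite !gK in Heq; lra.
  - destruct (h_unbounded t2 (h t1)) as [t3 [H23 H3]].
    destruct (Ranalysis5.IVT_interv (fun t => h t - h t1) t2 t3) as [t [Ht Ht0]];
      [| lra | lra | lra |].
    + intros u Hu. apply continuity_pt_minus; [apply h_cont; lra | apply continuity_pt_const].
      now intros ? ?.
    + assert (Ht1 : h t = h t1) by lra.
      apply (f_equal g) in Ht1. rewrite !gK in Ht1; lra.
Qed.

Section Increasing.

Hypothesis h_incr : forall t1 t2, a < t1 -> t1 < t2 -> h t1 < h t2.

Lemma h_lt_reflect (t1 t2 : R) : a < t1 -> a < t2 -> h t1 < h t2 -> t1 < t2.
Proof.
  intros H1 H2 Hh. destruct (Rtotal_order t1 t2) as [|[->|H21]]; [assumption | lra |].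
  pose proof (h_incr t2 t1 H2 H21). lra.
Qed.

Lemma image_index_succ (Pm n p p' : nat) :
  (forall q q', (Pm <= q)%nat -> (q < q')%nat -> z' q < z' q') ->
  a < z n -> z n < z (S n) -> (forall q, ~ (z n < z q < z (S n))) ->
  (Pm <= p)%nat -> (Pm <= p')%nat ->
  z' p = h (z n) -> z' p' = h (z (S n)) -> p' = S p.
Proof.
  intros Hz'_incr Ha Hn Hgap Hp Hp' Ep Ep'.
  assert (Hlt : z' p < z' p') by (rewrite Ep, Ep'; apply h_incr; assumption).
  assert (Hpp' : (p < p')%nat).
  { destruct (Nat.lt_trichotomy p p') as [|[->|Hp'p]]; [assumption | lra |].
    pose proof (Hz'_incr p' p Hp' Hp'p). lra. }
  destruct (Nat.eq_dec p' (S p)) as [|Hne]; [assumption | exfalso].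
  set (s := z' (S p)).
  assert (Hs : z' p < s < z' p') by (split; apply Hz'_incr; lia).
  assert (Hb : b < s) by (pose proof (h_maps (z n) Ha); lra).
  destruct (in_range_preimage s Hb) as [q Hq]; [now exists (S p)|].
  apply (Hgap q). rewrite Hq.
  split; apply h_lt_reflect; try rewrite hK; auto; lra.
Qed.

Lemma eventual_index_shift :
  exists N P, forall i, a < z (N + i) /\ h (z (N + i)) = z' (P + i).
Proof.
  destruct (perturbed_AP_increasing z' A' tau' HA' Hz') as [Pm HPm].
  destruct (prefix_bounded z' Pm) as [B HB].
  destruct (h_unbounded a B) as [t [Hat HBt]].
  destruct (perturbed_AP_cv_infty z A tau HA Hz t) as [Nt HNt].
  destruct (perturbed_AP_increasing z A tau HA Hz) as [Nm HNm].
  destruct (perturbed_AP_no_term_between z A tau HA Hz) as [Ng HNg].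
  set (N := max Nt (max Nm Ng)).
  assert (Hza : forall n, (N <= n)%nat -> a < z n)
    by (intros n Hn; pose proof (HNt n ltac:(lia)); lra).
  assert (Hidx : forall n, (N <= n)%nat -> exists p, (Pm <= p)%nat /\ z' p = h (z n)).
  { intros n Hn.
    destruct (proj1 (h_ranges (z n) (Hza n Hn)) (ex_intro _ n eq_refl)) as [p Hp].
    exists p. split; [|assumption].
    destruct (lt_dec p Pm) as [Hlt|]; [exfalso | lia].
    pose proof (HB p Hlt). pose proof (h_incr t (z n) Hat (HNt n ltac:(lia))). lra. }
  destruct (Hidx N (le_n N)) as [P [HP EP]].
  exists N, P. intros i. split; [apply Hza; lia|].
  induction i as [|i IH].
  - now rewrite !Nat.add_0_r.
  - destruct (Hidx (S (N + i)) ltac:(lia)) as [p' [Hp' Ep']].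
    rewrite !Nat.add_succ_r, <- (image_index_succ Pm (N + i) (P + i) p'); auto; try lia.
    + apply Hza; lia.
    + apply HNm; lia.
    + apply HNg; lia.
Qed.

End Increasing.

End Homeomorphism.

Lemma Int_part_nonneg (r : R) : 0 <= r -> (0 <= Int_part r)%Z.
Proof.
  intros Hr. destruct (base_Int_part r) as [_ H].
  assert (Hlt : (-1 < Int_part r)%Z) by (apply lt_IZR; lra). lia.
Qed.

Lemma INR_Z_to_nat (k : Z) : (0 <= k)%Z -> INR (Z.to_nat k) = IZR k.
Proof. intros Hk. now rewrite INR_IZR_INZ, Z2Nat.id. Qed.

Lemma dirichlet_approx (rho L : R) : irrational rho -> 0 < L ->
  exists (q : nat) (p : Z), (0 < q)%nat /\ 0 < Rabs (INR q * rho - IZR p) < L.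
Proof.
  intros Hirr HL. destruct (INR_unbounded (/ L)) as [N HN].
  assert (HN0 : 0 < INR N) by (pose proof (Rinv_0_lt_compat L HL); lra).
  set (fl i := Int_part (rho * INR i)).
  set (fr i := rho * INR i - IZR (fl i)).
  assert (Hfr : forall i, 0 <= fr i < 1).
  { intros i. unfold fr, fl. destruct (base_Int_part (rho * INR i)). lra. }
  destruct (pigeonhole (fun i => IZR (Int_part (INR N * fr i))) INR N)
    as [i [j [Hij Heq]]].
  - intros i _. set (k := Int_part (INR N * fr i)).
    assert (Hk : (0 <= k)%Z) by (apply Int_part_nonneg, Rmult_le_pos; [lra | apply Hfr]).
    exists (Z.to_nat k). rewrite INR_Z_to_nat by exact Hk. split; [|reflexivity].
    apply INR_lt. rewrite INR_Z_to_nat by exact Hk.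
    destruct (base_Int_part (INR N * fr i)) as [Hki _]. fold k in Hki.
    specialize (Hfr i). nra.
  - exists (j - i)%nat, (fl j - fl i)%Z. split; [lia|].
    replace (INR (j - i) * rho - IZR (fl j - fl i)) with (fr j - fr i)
      by (unfold fr; rewrite minus_INR, minus_IZR by lia; ring).
    split.
    + apply Rabs_pos_lt. intros Hfr0. apply Hirr.
      exists (fl j - fl i)%Z, (Z.of_nat j - Z.of_nat i)%Z. split; [lia|].
      assert (INR i < INR j) by (apply lt_INR; lia).
      rewrite !minus_IZR, <- !INR_IZR_INZ. unfold fr in Hfr0.
      field_simplify_eq; lra.
    + destruct (base_Int_part (INR N * fr i)), (base_Int_part (INR N * fr j)).
      simpl in Heq. rewrite Heq in *.
      assert (Habs : INR N * Rabs (fr j - fr i) < 1)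
        by (rewrite <- (Rabs_pos_eq (INR N)), <- Rabs_mult by lra; apply Rabs_def1; lra).
      assert (Hinv : / L * L = 1) by (field; lra).
      nra.
Qed.

(* Integer translates of the multiples of a step shorter than the window
   cannot jump over it. *)
Lemma lattice_hits_window (e w A L : R) : 0 < Rabs e < L ->
  exists (t : nat) (k : Z), A < IZR k + w + INR t * e < A + L.
Proof.
  assert (Hpos : forall e w A, 0 < e < L ->
            exists (t : nat) (k : Z), A < IZR k + w + INR t * e < A + L).
  { clear e w A. intros e w A He.
    set (k := Int_part (A - w)).
    destruct (base_Int_part (A - w)) as [Hk1 Hk2]. fold k in Hk1, Hk2.
    set (r := (A - w - IZR k) / e).
    assert (Er : r * e = A - w - IZR k) by (unfold r; field; lra).
    assert (Hr : 0 <= r) by nra.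
    exists (Z.to_nat (Int_part r + 1)), k.
    rewrite INR_Z_to_nat, plus_IZR by (pose proof (Int_part_nonneg r Hr); lia).
    destruct (base_Int_part r). split; nra. }
  intros [He0 HeL]. destruct (Rlt_or_le 0 e) as [He|He].
  - apply Hpos. rewrite Rabs_pos_eq in HeL; lra.
  - rewrite Rabs_left1 in HeL, He0 by lra.
    destruct (Hpos (- e) (- w) (- (A + L))) as [t [k Hk]]; [lra|].
    exists t, (- k)%Z. rewrite opp_IZR. lra.
Qed.

Lemma irrational_lattice_dense (rho c A L : R) (N : nat) :
  0 < rho -> irrational rho -> 0 < L ->
  exists i j : nat, (N <= i)%nat /\ (N <= j)%nat /\
    A < INR j - rho * INR i - c < A + L.
Proof.
  intros Hrho Hirr HL.
  destruct (dirichlet_approx rho L Hirr HL) as [q [p [Hq Hs]]].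
  destruct (mult_INR_eventually_gt rho (INR N - c - A) Hrho) as [N' HN'].
  set (n0 := max N N').
  destruct (lattice_hits_window (- (INR q * rho - IZR p)) (- rho * INR n0 - c) A L)
    as [t [k Hk]]; [now rewrite Rabs_Ropp|].
  set (K := (k + Z.of_nat t * p)%Z).
  assert (EK : IZR K - rho * INR (n0 + t * q) - c
               = IZR k + (- rho * INR n0 - c) + INR t * - (INR q * rho - IZR p))
    by (unfold K; rewrite plus_IZR, mult_IZR, <- INR_IZR_INZ, plus_INR, mult_INR; ring).
  assert (HKN : INR N < IZR K).
  { pose proof (HN' n0 ltac:(lia)).
    assert (rho * INR n0 <= rho * INR (n0 + t * q))
      by (apply Rmult_le_compat_l; [lra | apply le_INR; lia]).
    lra. }
  assert (HK0 : (0 <= K)%Z) by (apply le_IZR; pose proof (pos_INR N); lra).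
  exists (n0 + t * q)%nat, (Z.to_nat K). rewrite INR_Z_to_nat by exact HK0.
  split; [lia|]. split; [|lra].
  apply INR_le. rewrite INR_Z_to_nat by exact HK0. lra.
Qed.

Lemma affine_eventually_away_from_0 (r d : R) : r <> 0 \/ d <> 0 ->
  exists e, 0 < e /\ exists I,
    (forall i, (I <= i)%nat -> e <= r * INR i + d) \/
    (forall i, (I <= i)%nat -> r * INR i + d <= - e).
Proof.
  intros Hrd. destruct (Rtotal_order r 0) as [Hr|[Hr|Hr]].
  - destruct (mult_INR_eventually_gt (- r) (1 + d)) as [I HI]; [lra|].
    exists 1. split; [lra|]. exists I. right. intros i Hi.
    specialize (HI i Hi). lra.
  - assert (Hd : d <> 0) by (destruct Hrd; [contradiction | assumption]).
    exists (Rabs d). split; [now apply Rabs_pos_lt|]. exists 0%nat. subst r.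
    destruct (Rle_or_lt 0 d); [left | right]; intros i _;
      [rewrite Rabs_pos_eq | rewrite Rabs_left]; lra.
  - destruct (mult_INR_eventually_gt r (1 - d) Hr) as [I HI].
    exists 1. split; [lra|]. exists I. left. intros i Hi.
    specialize (HI i Hi). lra.
Qed.

(* Otherwise the two gaps eventually differ by at least some e > 0 with a
   fixed sign, and density puts the first gap in a window of width e/2 that
   forces the second to have the opposite sign. *)
Lemma sign_pattern_rigid (rho rho' c c' : R) : 0 < rho -> irrational rho ->
  (forall eta, 0 < eta -> exists N, forall i j, (N <= i)%nat -> (N <= j)%nat ->
     (INR j - rho * INR i - c < - eta -> INR j - rho' * INR i - c' <= eta) /\
     (eta < INR j - rho * INR i - c -> - eta <= INR j - rho' * INR i - c')) ->
  rho = rho' /\ c = c'.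
Proof.
  intros Hrho Hirr Hsign. apply NNPP. intros Hne.
  destruct (affine_eventually_away_from_0 (rho - rho') (c - c')) as [e [He [I HI]]].
  { destruct (Req_dec rho rho'); [right | left]; intros Hz; apply Hne; lra. }
  destruct (Hsign (e / 4)) as [N HN]; [lra|].
  destruct HI as [Hup|Hdown].
  - destruct (irrational_lattice_dense rho c (- (3 * e / 4)) (e / 2) (max N I) Hrho Hirr)
      as [i [j [Hi [Hj Hu]]]]; [lra|].
    destruct (HN i j ltac:(lia) ltac:(lia)) as [Hv _].
    specialize (Hup i ltac:(lia)). specialize (Hv ltac:(lra)). lra.
  - destruct (irrational_lattice_dense rho c (e / 4) (e / 2) (max N I) Hrho Hirr)
      as [i [j [Hi [Hj Hu]]]]; [lra|].
    destruct (HN i j ltac:(lia) ltac:(lia)) as [_ Hv].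
    specialize (Hdown i ltac:(lia)). specialize (Hv ltac:(lra)). lra.
Qed.

Lemma perturbed_AP_order (x y : nat -> R) (alpha beta gamma delta eta : R) :
  0 < gamma -> 0 < eta -> perturbed_AP x alpha beta -> perturbed_AP y gamma delta ->
  exists N, forall i j, (N <= i)%nat -> (N <= j)%nat ->
    (eta < INR j - alpha / gamma * INR i - (beta - delta) / gamma -> x i < y j) /\
    (INR j - alpha / gamma * INR i - (beta - delta) / gamma < - eta -> y j < x i).
Proof.
  intros Hgamma Heta Hx Hy.
  destruct (perturbed_AP_close x alpha beta Hx (gamma * eta / 2)) as [Nx HNx];
    [nra|].
  destruct (perturbed_AP_close y gamma delta Hy (gamma * eta / 2)) as [Ny HNy];
    [nra|].
  exists (max Nx Ny). intros i j Hi Hj.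
  pose proof (Rabs_def2 _ _ (HNx i ltac:(lia))).
  pose proof (Rabs_def2 _ _ (HNy j ltac:(lia))).
  set (u := INR j - alpha / gamma * INR i - (beta - delta) / gamma).
  assert (Eu : gamma * u = gamma * INR j + delta - (alpha * INR i + beta))
    by (unfold u; field; lra).
  split; intros Hu.
  - assert (gamma * eta < gamma * u) by (apply Rmult_lt_compat_l; lra). lra.
  - assert (gamma * u < gamma * - eta) by (apply Rmult_lt_compat_l; lra). lra.
Qed.

Lemma conjugate_APs_rigid (h : R -> R) (a : R) (x y x' y' : nat -> R)
  (alpha beta gamma delta alpha' beta' gamma' delta' : R) :
  0 < alpha -> 0 < gamma -> 0 < gamma' ->
  perturbed_AP x alpha beta -> perturbed_AP y gamma delta ->
  perturbed_AP x' alpha' beta' -> perturbed_AP y' gamma' delta' ->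
  irrational (alpha / gamma) ->
  (forall t1 t2, a < t1 -> t1 < t2 -> h t1 < h t2) ->
  (forall i, a < x i /\ h (x i) = x' i) -> (forall j, a < y j /\ h (y j) = y' j) ->
  alpha / gamma = alpha' / gamma' /\ (beta - delta) / gamma = (beta' - delta') / gamma'.
Proof.
  intros Ha Hg Hg' Hx Hy Hx' Hy' Hirr h_incr Hxx' Hyy'.
  apply sign_pattern_rigid; [apply Rdiv_pos_pos; lra | exact Hirr |].
  intros eta Heta.
  destruct (perturbed_AP_order x y alpha beta gamma delta eta) as [N HN]; auto.
  destruct (perturbed_AP_order x' y' alpha' beta' gamma' delta' eta) as [N' HN']; auto.
  exists (max N N'). intros i j Hi Hj.
  destruct (HN i j ltac:(lia) ltac:(lia)) as [Hxy Hyx].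
  destruct (HN' i j ltac:(lia) ltac:(lia)) as [Hxy' Hyx'].
  destruct (Hxx' i) as [Hxa Ex], (Hyy' j) as [Hya Ey].
  split; intros Hu; apply Rnot_lt_le; intros Hv.
  - assert (h (y j) < h (x i)) by (apply h_incr; auto).
    specialize (Hxy' Hv). lra.
  - assert (h (x i) < h (y j)) by (apply h_incr; auto).
    specialize (Hyx' Hv). lra.
Qed.

Theorem lemma7 (x y x' y' : nat -> R)
  (alpha beta gamma delta alpha' beta' gamma' delta' : R) :
  0 < alpha -> 0 < gamma -> 0 < alpha' -> 0 < gamma' ->
  perturbed_AP x alpha beta -> perturbed_AP y gamma delta ->
  perturbed_AP x' alpha' beta' -> perturbed_AP y' gamma' delta' ->
  irrational (alpha / gamma) -> irrational (alpha' / gamma') ->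
  top_equiv_pinfty x y x' y' ->
  alpha / gamma = alpha' / gamma' /\
  in_group_1_rho (alpha / gamma)
    ((beta - delta) / gamma - (beta' - delta') / gamma').
Proof.
  intros Ha Hg Ha' Hg' Hx Hy Hx' Hy' Hirr _
    [h [a [b [[g [h_maps [g_maps [gK [hK [h_cont _]]]]]] Hranges]]]].
  pose proof (fun t Ht => proj1 (Hranges t Ht)) as Hx_ranges.
  pose proof (fun t Ht => proj2 (Hranges t Ht)) as Hy_ranges.
  assert (h_incr : forall t1 t2, a < t1 -> t1 < t2 -> h t1 < h t2)
    by exact (h_increasing h g a b g_maps gK hK x x' alpha beta alpha' beta'
                Ha Ha' Hx Hx' Hx_ranges h_cont).
  destruct (eventual_index_shift h g a b h_maps g_maps hK x x' alpha beta alpha' beta'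
              Ha Ha' Hx Hx' Hx_ranges h_incr) as [N [P HxP]].
  destruct (eventual_index_shift h g a b h_maps g_maps hK y y' gamma delta gamma' delta'
              Hg Hg' Hy Hy' Hy_ranges h_incr) as [M [Q HyQ]].
  destruct (conjugate_APs_rigid h a
              (fun i => x (N + i)%nat) (fun j => y (M + j)%nat)
              (fun i => x' (P + i)%nat) (fun j => y' (Q + j)%nat)
              alpha (beta + alpha * INR N) gamma (delta + gamma * INR M)
              alpha' (beta' + alpha' * INR P) gamma' (delta' + gamma' * INR Q))
    as [Erho Ec]; auto using perturbed_AP_shift.
  split; [exact Erho|].
  exists (Z.of_nat M - Z.of_nat Q)%Z, (Z.of_nat P - Z.of_nat N)%Z.
  rewrite !minus_IZR, <- !INR_IZR_INZ.
  replace ((beta + alpha * INR N - (delta + gamma * INR M)) / gamma)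
    with ((beta - delta) / gamma + alpha / gamma * INR N - INR M) in Ec by (field; lra).
  replace ((beta' + alpha' * INR P - (delta' + gamma' * INR Q)) / gamma')
    with ((beta' - delta') / gamma' + alpha' / gamma' * INR P - INR Q) in Ec by (field; lra).
  rewrite <- Erho in Ec. lra.
Qed.
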